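(* For all $s\in\mathbb Z_+$ and $\gamma\in[0,1]$, \[ \Big\|\mathrm{diag}\big(Q\,\mathrm{diag}(Q^s)J\big)-\frac{\mathrm{tr}(Q^s)}{N^2}I\Big\|\le\Big\|\frac1N\mathrm{diag}(Q^s)-\frac{\mathrm{tr}(Q^s)}{N^2}I\Big\|\le\min\left\{\frac{4\min_{x\in E}[N-\#\mathcal R^\gamma_Q(x,s)]}{N}+\gamma,\ \frac{2\,\mathrm{tr}(|Q|^s;Q<1)}{N}\right\}. \]
   Context: $E$ is a finite set with $N=\#E>8$ elements, listed in a fixed order; $Q$ is an irreducible stochastic matrix on $E$ with $Q(x,y)=Q(y,x)$ for all $x,y$ and $\mathrm{tr}(Q)=0$. $I$ is the identity, $J$ the matrix with all entries $1/N$, $\mathrm{diag}(C)$ the diagonal matrix with the same diagonal as $C$. $\|C\|=\sum_{x,y\in E}|C(x,y)|$. $\mathcal R^\gamma_Q(x,s)=\{y\in E:|Q^s(x,x)-Q^s(y,y)|\le\gamma\}$. For a function $f$ on $[-1,1]$ and $A\subseteq\mathbb R$, $\mathrm{tr}(f(Q);Q\in A)=\mathrm{tr}(f(Q)\mathbf 1_A(Q))=\sum_{q\in A}f(q)$ over eigenvalues $q$ of $Q$ with multiplicity; in particular $\mathrm{tr}(|Q|^s;Q<1)=\sum_{q<1}|q|^s$. *)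

(* Reals are modelled by an arbitrary real closed field R. *)
From HB Require Import structures.
From mathcomp Require Import all_boot all_order all_algebra.
From Stdlib Require Import ClassicalEpsilon.
Set Implicit Arguments. Unset Strict Implicit. Unset Printing Implicit Defensive.
Import Order.TTheory GRing.Theory Num.Theory.
Local Open Scope ring_scope.

(* E = 'I_N (fixed order); matrices on E are 'M[R]_N. *)

Definition stochastic (R : rcfType) (N : nat) (Q : 'M[R]_N) : Prop :=
  (forall x y, 0 <= Q x y) /\ (forall x, \sum_y Q x y = 1).

Definition irreducible_mx (R : rcfType) (N : nat) (Q : 'M[R]_N) : Prop :=
  forall x y, exists n : nat, 0 < (Q ^+ n) x y.

Definition Jmx (R : rcfType) (N : nat) : 'M[R]_N := const_mx (N%:R^-1).

Definition diagm (R : rcfType) (N : nat) (C : 'M[R]_N) : 'M[R]_N :=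
  \matrix_(i, j) ((i == j)%:R * C i i).

Definition mnorm (R : rcfType) (N : nat) (C : 'M[R]_N) : R :=
  \sum_x \sum_y `|C x y|.

Definition Rset (R : rcfType) (N : nat) (Q : 'M[R]_N) (gamma : R) (x : 'I_N) (s : nat)
  : {set 'I_N} :=
  [set y | `|(Q ^+ s) x x - (Q ^+ s) y y| <= gamma].

(* eigenvalues with multiplicity: the roots (with multiplicity) of the
   characteristic polynomial, chosen so that char_poly A = prod (X - q)
   (this factorization exists for real symmetric matrices). *)
Definition eigseq (R : rcfType) (N : nat) (A : 'M[R]_N) : seq R :=
  epsilon (inhabits [::])
    (fun r : seq R => char_poly A = \prod_(z <- r) ('X - z%:P)).

Definition spec_tr (R : rcfType) (N : nat) (A : 'M[R]_N) (f : R -> R) (P : pred R) : R :=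
  \sum_(q <- eigseq A | P q) f q.

(* Write [a x = Q^s(x,x)]; the middle quantity is [sum_x |N a x - tr Q^s| / N^2].
   Multiplying by the doubly stochastic [Q] averages a vector and cannot increase
   its l1-norm, which gives the first inequality.  For the second one, the
   deviation [sum_x |N a x - sum_y a y|] is at most [sum_(x,y) |a x - a y|]: the
   pairs inside a cluster [R^gamma_Q(x,s)] lie in an interval of length [2 gamma]
   and contribute at most [N^2 gamma], the other pairs at most [1] each.  For the
   third one, a spectral decomposition writes [a x = sum_i W_i(x) r_i^s] with
   [W_i(x) = |phi_i(x)|^2] for an orthonormal eigenbasis [phi]; all [r_i <= 1], and
   by irreducibility the eigenfunctions for [r_i = 1] are constant, so their
   weights are uniform and cancel, leaving at most [2 N sum_(r_i < 1) |r_i|^s]. *)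

From HB Require Import structures.
From mathcomp Require Import all_boot all_order all_algebra.
From mathcomp Require Import lra ring.
From mathcomp Require Import complex.
From Stdlib Require Import ClassicalEpsilon.
Set Implicit Arguments. Unset Strict Implicit. Unset Printing Implicit Defensive.
Import Order.TTheory GRing.Theory Num.Theory.
Local Open Scope ring_scope.

Section PairwiseDistances.
Variables (R : realFieldType) (T : finType).
Implicit Types (a : T -> R) (A : {set T}).

Lemma sum_dev_le_sum_dist a :
  \sum_x `|#|T|%:R * a x - \sum_y a y| <= \sum_x \sum_y `|a x - a y|.
Proof.
apply: ler_sum => x _.
rewrite (_ : _ - _ = \sum_y (a x - a y)); first exact: ler_norm_sum.
by rewrite sumrB sumr_const mulr_natl.
Qed.

Lemma sum_dist_interval a A l w : 0 <= w ->
  (forall x, x \in A -> l <= a x <= l + w) ->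
  \sum_(x in A) \sum_(y in A) `|a x - a y| <= #|A|%:R ^+ 2 * w / 2.
Proof.
move=> w_ge0 aA; have [w0|w_neq0] := eqVneq w 0.
  rewrite w0 mulr0 mul0r big1 // => x xA; rewrite big1 // => y yA.
  move: (aA x xA) (aA y yA); rewrite w0 addr0 => /andP[? ?] /andP[? ?].
  by rewrite (_ : a x - a y = 0) ?normr0 //; lra.
have w_gt0 : 0 < w by rewrite lt_def w_neq0.
pose u x := a x - l; pose S := \sum_(x in A) u x; pose n : R := #|A|%:R.
(* Linearizing [|p - q|] on [[0, w]^2] turns the sum into [2 S (n w - S) / w],
   which is at most [(n w)^2 / (2 w)]. *)
have dist_le x y : x \in A -> y \in A ->
    w * `|a x - a y| <= u x * (w - u y) + u y * (w - u x).
  move=> /aA/andP[? ?] /aA/andP[? ?]; rewrite /u.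
  by case: (lerP (a y) (a x)) => ?; nra.
have sumE : \sum_(x in A) \sum_(y in A) (u x * (w - u y) + u y * (w - u x))
    = 2 * (S * (n * w) - S ^+ 2).
  have sum_w_sub : \sum_(y in A) (w - u y) = n * w - S.
    by rewrite sumrB sumr_const mulr_natl.
  under eq_bigr => x _ do rewrite big_split /= -mulr_sumr -mulr_suml sum_w_sub.
  by rewrite big_split /= -mulr_suml -mulr_sumr sum_w_sub -/S; ring.
rewrite -(ler_pM2l w_gt0) mulr_sumr; apply: le_trans (_ : _ <= 2 * (S * (n * w) - S ^+ 2)) _.
  rewrite -sumE; apply: ler_sum => x xA; rewrite mulr_sumr.
  by apply: ler_sum => y yA; exact: dist_le.
have := sqr_ge0 (n * w - 2 * S); rewrite -/n; nra.
Qed.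

Lemma sum_dist_cluster a A l w : (forall x, 0 <= a x <= 1) -> 0 <= w ->
  (forall x, x \in A -> l <= a x <= l + w) ->
  \sum_x \sum_y `|a x - a y| <= #|T|%:R ^+ 2 * w / 2 + 2 * #|T|%:R * (#|T| - #|A|)%:R.
Proof.
move=> a01 w_ge0 aA.
have dist_le1 x y : `|a x - a y| <= 1.
  by move: (a01 x) (a01 y) => /andP[? ?] /andP[? ?]; case: (lerP (a y) (a x)) => _; lra.
have sum_le_card (P : pred T) (F : T -> R) : (forall x, F x <= 1) ->
    \sum_(x | P x) F x <= #|P|%:R.
  by move=> F1; rewrite -sumr_const; apply: ler_sum => x _.
have sum_dist_le_card x : \sum_y `|a x - a y| <= #|T|%:R by exact: sum_le_card.
have card_out : #|[pred x | x \notin A]| = (#|T| - #|A|)%N.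
  by rewrite -(cardC A) addKn.
rewrite (bigID (mem A)) /=.
under eq_bigr => x _ do rewrite (bigID (mem A)) /=.
rewrite big_split /=.
have in_in := sum_dist_interval w_ge0 aA.
have in_out : \sum_(x in A) \sum_(y | y \notin A) `|a x - a y| <= #|A|%:R * (#|T| - #|A|)%:R.
  apply: le_trans (_ : _ <= \sum_(x in A) #|[pred y | y \notin A]|%:R) _.
    by apply: ler_sum => x _; exact: sum_le_card.
  by rewrite sumr_const card_out mulr_natl.
have out_all : \sum_(x | x \notin A) \sum_y `|a x - a y| <= (#|T| - #|A|)%:R * #|T|%:R.
  apply: le_trans (_ : _ <= \sum_(x | x \notin A) #|T|%:R) _.
    by apply: ler_sum => x _; exact: sum_dist_le_card.
  by rewrite sumr_const card_out mulr_natl.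
have card_le : (#|A| <= #|T|)%N by exact: max_card.
move: in_in in_out out_all; rewrite natrB // => ? ? ?.
have : #|A|%:R ^+ 2 * w <= #|T|%:R ^+ 2 * w.
  by rewrite ler_wpM2r // lerXn2r ?nnegrE ?ler_nat.
have : #|A|%:R <= #|T|%:R :> R by rewrite ler_nat.
nra.
Qed.
End PairwiseDistances.

Section StochasticMatrices.
Variables (R : rcfType) (N : nat).
Implicit Types (Q : 'M[R]_N) (u : 'I_N -> R).

Lemma stochastic_exp Q k : stochastic Q -> stochastic (Q ^+ k).
Proof.
move=> [Q_ge0 Q1]; elim: k => [|k [Qk_ge0 Qk1]].
  rewrite expr0; split=> [x y|x]; first by rewrite mxE ler0n.
  by rewrite (bigD1 x) //= big1 => [|y yx]; rewrite mxE ?eqxx ?addr0 // eq_sym (negbTE yx).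
rewrite exprS -mulmxE; split=> [x y|x].
  by rewrite mxE; apply: sumr_ge0 => z _; apply: mulr_ge0.
under eq_bigr do rewrite mxE.
rewrite exchange_big /= -(Q1 x); apply: eq_bigr => z _.
by rewrite -mulr_sumr Qk1 mulr1.
Qed.

Lemma stochastic_entry_bounds Q x y : stochastic Q -> 0 <= Q x y <= 1.
Proof. by move=> [Q_ge0 Q1]; rewrite Q_ge0 -(Q1 x) (bigD1 y) //= lerDl sumr_ge0. Qed.

Lemma sum_norm_symmetric_stochastic_mul_le Q u : Q^T = Q -> stochastic Q ->
  \sum_x `|\sum_z Q x z * u z| <= \sum_z `|u z|.
Proof.
move=> Q_sym [Q_ge0 Q1].
apply: le_trans (_ : \sum_x \sum_z Q x z * `|u z| <= _).
  apply: ler_sum => x _; apply: le_trans (ler_norm_sum _ _ _) _.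
  by apply: ler_sum => z _; rewrite normrM ger0_norm.
rewrite exchange_big /=; apply: ler_sum => z _.
rewrite -mulr_suml (eq_bigr (Q z)) ?Q1 ?mul1r // => x _.
by rewrite -[in LHS]Q_sym mxE.
Qed.

Lemma stochastic_eigenvalue_le1 Q u (l : R) x0 : stochastic Q ->
  (forall x, \sum_y Q x y * u y = l * u x) -> u x0 != 0 -> l <= 1.
Proof.
move=> [Q_ge0 Q1] uQ ux0_neq0; apply: le_trans (ler_norm l) _.
have [x _ u_le_x] := @real_arg_maxP _ _ x0 xpredT (fun y => `|u y|) erefl
   (fun _ _ => normr_real _).
have ux_gt0 : 0 < `|u x| by apply: lt_le_trans (u_le_x x0 erefl); rewrite normr_gt0.
rewrite -(ler_pM2r ux_gt0) mul1r -normrM -uQ -[leRHS]mul1r -(Q1 x) mulr_suml.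
apply: le_trans (ler_norm_sum _ _ _) _; apply: ler_sum => y _.
by rewrite normrM ger0_norm //; apply: ler_wpM2l => //; exact: u_le_x.
Qed.

Lemma harmonic_exp Q u : (forall x, \sum_y Q x y * u y = u x) ->
  forall k x, \sum_y (Q ^+ k) x y * u y = u x.
Proof.
move=> uQ; elim=> [|k IHk] x.
  rewrite expr0 (bigD1 x) //= big1 => [|y yx]; first by rewrite mxE eqxx mul1r addr0.
  by rewrite mxE eq_sym (negbTE yx) mul0r.
rewrite exprS -mulmxE -[RHS]uQ.
under eq_bigr do rewrite mxE mulr_suml.
rewrite exchange_big /=; apply: eq_bigr => z _.
by rewrite -IHk mulr_sumr; apply: eq_bigr => y _; rewrite mulrA.
Qed.

(* Maximum principle: a harmonic function stays maximal along every path out of a maximum. *)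
Lemma irreducible_harmonic_const Q u : stochastic Q -> irreducible_mx Q ->
  (forall x, \sum_y Q x y * u y = u x) -> forall y z, u y = u z.
Proof.
move=> Q_st Q_irr uQ y z.
have [x _ u_le_x] := @real_arg_maxP _ _ y xpredT u erefl (fun _ _ => num_real _).
suff ux v : u v = u x by rewrite !ux.
have [k Qk_gt0] := Q_irr x v.
have [Qk_ge0 Qk1] := stochastic_exp k Q_st.
have term_ge0 w : 0 <= (Q ^+ k) x w * (u x - u w).
  by apply: mulr_ge0 => //; rewrite subr_ge0; exact: u_le_x.
have : \sum_w (Q ^+ k) x w * (u x - u w) = 0.
  under eq_bigr do rewrite mulrBr.
  by rewrite sumrB -mulr_suml Qk1 mul1r harmonic_exp // subrr.
rewrite (bigD1 v) //= => /eqP; rewrite paddr_eq0 ?sumr_ge0 // => /andP[+ _].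
by rewrite mulf_eq0 gt_eqF //= subr_eq0 => /eqP.
Qed.

End StochasticMatrices.

Lemma char_poly_similar (F : fieldType) n (A P P' : 'M[F]_n) :
  P' *m P = 1%:M -> char_poly (P' *m A *m P) = char_poly A.
Proof.
move=> P'P; rewrite /char_poly /char_poly_mx.
have P'Pc : map_mx polyC P' *m map_mx polyC P = 1%:M by rewrite -map_mxM P'P map_mx1.
have -> : 'X%:M - map_mx polyC (P' *m A *m P) =
    map_mx polyC P' *m ('X%:M - map_mx polyC A) *m map_mx polyC P.
  rewrite mulmxBr mulmxBl !map_mxM mul_mx_scalar -scalemxAl P'Pc.
  by rewrite scale_scalar_mx mulr1.
by rewrite !det_mulmx mulrAC -det_mulmx P'Pc det1 mul1r.
Qed.

Section SymmetricSpectralDecomposition.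
Variable R : rcfType.
Local Notation toC := (real_complex R).
Local Open Scope sesquilinear_scope.
Local Open Scope complex_scope.

Lemma Re_mul_real (z : R[i]) q : complex.Re (z * toC q) = complex.Re z * q.
Proof. by case: z => a b /=; ring. Qed.

Lemma Im_mul_real (z : R[i]) q : complex.Im (z * toC q) = complex.Im z * q.
Proof. by case: z => a b /=; ring. Qed.

Lemma real_symmetric_unitary_diag N (Q : 'M[R]_N) : Q^T = Q ->
  exists (P : 'M[R[i]]_N) (r : 'I_N -> R),
  [/\ P *m P^t* = 1%:M, P^t* *m P = 1%:M &
      map_mx toC Q = P^t* *m diag_mx (\row_i toC (r i)) *m P].
Proof.
move=> Q_sym; pose Qc := map_mx toC Q.
have Qc_herm : Qc \is hermsymmx.
  apply/is_hermitianmxP/matrixP => x y; rewrite !mxE expr0 mul1r.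
  rewrite (_ : Q x y = Q y x); last by rewrite -{1}Q_sym mxE.
  by symmetry; exact: conjc_real.
pose P := spectralmx Qc; pose d := spectral_diag Qc.
have P_unitary : P \is unitarymx := spectral_unitarymx Qc.
exists P, (fun i => complex.Re (d 0 i)); split.
- exact/unitarymxP.
- by rewrite -invmx_unitary // mulVmx ?spectral_unit.
rewrite (_ : \row_i _ = d); last first.
  apply/rowP => i; rewrite mxE RRe_real //.
  exact: (mxOverP (hermitian_spectral_diag_real Qc_herm)).
rewrite -invmx_unitary //; exact: orthomx_spectralP (hermitian_normalmx Qc_herm).
Qed.

(* [u1 i] and [u2 i] are the real and imaginary parts of the row [P i] of a
   unitary diagonalizing [Q] over [R[i]], so that [W i x = |P i x|^2]. *)
Lemma symmetric_spectral_decomposition N (Q : 'M[R]_N) : Q^T = Q ->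
 exists (r : 'I_N -> R) (W u1 u2 : 'I_N -> 'I_N -> R),
  [/\ forall i x, W i x = u1 i x ^+ 2 + u2 i x ^+ 2,
      forall i, \sum_x W i x = 1,
      forall k x, (Q ^+ k) x x = \sum_i W i x * r i ^+ k,
      forall i x, \sum_y Q x y * u1 i y = r i * u1 i x /\
                  \sum_y Q x y * u2 i y = r i * u2 i x &
      char_poly Q = \prod_i ('X - (r i)%:P)].
Proof.
move=> Q_sym; have [P [r [PP' P'P QcE]]] := real_symmetric_unitary_diag Q_sym.
pose u1 i x := complex.Re (P i x); pose u2 i x := complex.Im (P i x).
pose W i x := u1 i x ^+ 2 + u2 i x ^+ 2.
have PJ i x : P i x * (P i x)^* = toC (W i x) by rewrite add_Re2_Im2 normCK.
exists r, W, u1, u2; split => //.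
- move=> i; apply: (@complexI R); rewrite rmorph_sum rmorph1 /=.
  have := congr1 (fun M : 'M_N => M i i) PP'; rewrite !mxE eqxx mulr1n => <-.
  by apply: eq_bigr => x _; rewrite !mxE -PJ.
- have QkE k : map_mx toC (Q ^+ k) = P^t* *m diag_mx (\row_i toC (r i ^+ k)) *m P.
    elim: k => [|k IHk].
      rewrite expr0 map_mx1 (_ : diag_mx _ = 1%:M) ?mulmx1 ?P'P //.
      by apply/matrixP => i j; rewrite !mxE expr0.
    rewrite exprSr -mulmxE map_mxM IHk QcE.
    rewrite -!mulmxA (mulmxA P) PP' mul1mx (mulmxA (diag_mx _)) mulmx_diag.
    by congr (_ *m (_ *m _)); apply/matrixP => i j; rewrite !mxE exprSr rmorphM.
  move=> k x; apply: (@complexI R); rewrite rmorph_sum /=.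
  have := congr1 (fun M : 'M_N => M x x) (QkE k); rewrite mxE /= => ->.
  rewrite mxE; apply: eq_bigr => i _.
  by rewrite mul_mx_diag !mxE rmorphM /= -PJ; ring.
- move=> i x.
  have PQc : P *m map_mx toC Q = diag_mx (\row_i toC (r i)) *m P.
    by rewrite QcE !mulmxA PP' mul1mx.
  have := congr1 (fun M : 'M_N => M i x) PQc; rewrite /= mul_diag_mx !mxE => eigc.
  have eig : \sum_y P i y * toC (Q x y) = toC (r i) * P i x.
    by rewrite -eigc; apply: eq_bigr => y _; rewrite mxE -{1}Q_sym mxE.
  split.
    transitivity (complex.Re (\sum_y P i y * toC (Q x y))).
      by rewrite raddf_sum; apply: eq_bigr => y _; rewrite /= Re_mul_real mulrC.
    by rewrite eig mulrC Re_mul_real mulrC.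
  transitivity (complex.Im (\sum_y P i y * toC (Q x y))).
    by rewrite raddf_sum; apply: eq_bigr => y _; rewrite /= Im_mul_real mulrC.
  by rewrite eig mulrC Im_mul_real mulrC.
- apply: (@map_poly_inj _ _ toC).
  rewrite map_char_poly QcE char_poly_similar // char_poly_trig ?diag_mx_is_trig //.
  rewrite rmorph_prod; apply: eq_bigr => i _.
  by rewrite mxE eqxx mulr1n mxE /= map_polyXsubC.
Qed.

End SymmetricSpectralDecomposition.

Lemma sum_dev_spectral_le (R : realFieldType) (I T : finType) (W : I -> T -> R)
    (r : I -> R) (a : T -> R) s :
  (forall i, (forall x, 0 <= W i x) /\ \sum_x W i x = 1) ->
  (forall x, a x = \sum_i W i x * r i ^+ s) -> (forall i, r i <= 1) ->
  (forall i, r i = 1 -> forall x, #|T|%:R * W i x = 1) ->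
  \sum_x `|#|T|%:R * a x - \sum_y a y| <= 2 * #|T|%:R * \sum_(i | r i < 1) `|r i| ^+ s.
Proof.
move=> W_distr aE r_le1 W_unif.
have W_ge0 i x : 0 <= W i x by case: (W_distr i) => ->.
have W1 i : \sum_x W i x = 1 by case: (W_distr i).
have sum_a : \sum_y a y = \sum_i r i ^+ s.
  under eq_bigr do rewrite aE.
  by rewrite exchange_big /=; apply: eq_bigr => i _; rewrite -mulr_suml W1 mul1r.
(* Eigenvalues equal to [1] carry uniform weights, so they drop out. *)
have devE x : #|T|%:R * a x - \sum_y a y =
    \sum_(i | r i < 1) r i ^+ s * (#|T|%:R * W i x - 1).
  rewrite sum_a aE mulr_sumr -sumrB [RHS]big_mkcond /=; apply: eq_bigr => i _.
  case: ifP => [_|ri_lt1]; first by ring.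
  have ri1 : r i = 1 by apply/eqP; rewrite eq_le r_le1 leNgt ri_lt1.
  by rewrite ri1 expr1n mulr1 W_unif // subrr.
under eq_bigr do rewrite devE.
apply: le_trans (_ : \sum_x \sum_(i | r i < 1) `|r i| ^+ s * (#|T|%:R * W i x + 1) <= _).
  apply: ler_sum => x _; apply: le_trans (ler_norm_sum _ _ _) _.
  apply: ler_sum => i _; rewrite normrM normrX ler_wpM2l ?exprn_ge0 //.
  by apply: le_trans (ler_normB _ _) _; rewrite normr1 ger0_norm ?mulr_ge0.
rewrite exchange_big /= mulr_sumr; apply: ler_sum => i _.
rewrite -mulr_sumr big_split /= -mulr_sumr W1 sumr_const mulr_natl.
by have := exprn_ge0 s (normr_ge0 (r i)); lra.
Qed.

Lemma spec_trE (R : rcfType) N (Q : 'M[R]_N) (r : 'I_N -> R) f (P : pred R) :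
  char_poly Q = \prod_i ('X - (r i)%:P) ->
  spec_tr Q f P = \sum_(i | P (r i)) f (r i).
Proof.
move=> charQ; have rs_def : exists rs, char_poly Q = \prod_(z <- rs) ('X - z%:P).
  by exists [seq r i | i <- index_enum 'I_N]; rewrite big_map.
have := epsilon_spec (inhabits [::]) _ rs_def; rewrite -/(eigseq Q) => charQ'.
have eig_perm : perm_eq (eigseq Q) [seq r i | i <- index_enum 'I_N].
  by apply: prod_XsubC_eq; rewrite -charQ' charQ big_map.
by rewrite /spec_tr (perm_big _ eig_perm) big_map.
Qed.

Lemma stochastic_spectral_decomposition (R : rcfType) N (Q : 'M[R]_N) :
  Q^T = Q -> stochastic Q -> irreducible_mx Q ->
  exists (r : 'I_N -> R) (W : 'I_N -> 'I_N -> R),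
  [/\ forall i, (forall x, 0 <= W i x) /\ \sum_x W i x = 1,
      forall k x, (Q ^+ k) x x = \sum_i W i x * r i ^+ k,
      forall i, r i <= 1, forall i, r i = 1 -> forall x, N%:R * W i x = 1 &
      char_poly Q = \prod_i ('X - (r i)%:P)].
Proof.
move=> Q_sym Q_st Q_irr.
have [r [W [u1 [u2 [WE W1 QkE eig charQ]]]]] := symmetric_spectral_decomposition Q_sym.
exists r, W; split => // i.
- by split=> // x; rewrite WE addr_ge0 ?sqr_ge0.
- have [x u_neq0] : exists x, (u1 i x != 0) || (u2 i x != 0).
    apply/existsP; apply: contraTT (oner_neq0 R); rewrite negb_exists negbK.
    move=> /forallP u_eq0; rewrite -(W1 i) big1 // => x _.
    by move: (u_eq0 x); rewrite negb_or !negbK WE => /andP[/eqP-> /eqP->]; rewrite expr0n addr0.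
  by case/orP: u_neq0 => u_neq0; apply: (stochastic_eigenvalue_le1 Q_st _ u_neq0) => y;
    case: (eig i y).
- move=> ri1 x.
  have harm1 y : \sum_z Q y z * u1 i z = u1 i y.
    by case: (eig i y) => -> _; rewrite ri1 mul1r.
  have harm2 y : \sum_z Q y z * u2 i z = u2 i y.
    by case: (eig i y) => _ ->; rewrite ri1 mul1r.
  have u1_const := irreducible_harmonic_const Q_st Q_irr harm1.
  have u2_const := irreducible_harmonic_const Q_st Q_irr harm2.
  rewrite -[RHS](W1 i) (eq_bigr (fun=> W i x)) ?sumr_const ?card_ord ?mulr_natl //.
  by move=> y _; rewrite !WE (u1_const y x) (u2_const y x).
Qed.

Lemma mnorm_diag (R : rcfType) N (M : 'M[R]_N) (g : 'I_N -> R) :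
  (forall x y, M x y = (x == y)%:R * g x) -> mnorm M = \sum_x `|g x|.
Proof.
move=> ME; apply: eq_bigr => x _.
rewrite (bigD1 x) //= big1 => [|y yx]; first by rewrite ME eqxx mul1r addr0.
by rewrite ME eq_sym (negbTE yx) mul0r normr0.
Qed.

Section DiagonalDeviation.
Variables (R : rcfType) (N : nat).
Implicit Types (Q A : 'M[R]_N).

Lemma mnorm_scaled_diagm_sub A c :
  mnorm (N%:R^-1 *: diagm A - c *: 1%:M) = \sum_x `|N%:R^-1 * A x x - c|.
Proof. by apply: mnorm_diag => x y; rewrite !mxE; ring. Qed.

Lemma mnorm_diagm_smooth_le Q A c : Q^T = Q -> stochastic Q ->
  mnorm (diagm (Q *m diagm A *m Jmx R N) - c *: 1%:M) <=
  mnorm (N%:R^-1 *: diagm A - c *: 1%:M).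
Proof.
move=> Q_sym Q_st; have [_ Q1] := Q_st.
rewrite mnorm_scaled_diagm_sub
  (@mnorm_diag _ _ _ (fun x => \sum_z Q x z * (N%:R^-1 * A z z - c))).
  exact: sum_norm_symmetric_stochastic_mul_le.
move=> x y; rewrite !mxE.
have -> : \sum_z Q x z * (N%:R^-1 * A z z - c) = \sum_z Q x z * (N%:R^-1 * A z z) - c.
  by under eq_bigr do rewrite mulrBr; rewrite sumrB -mulr_suml Q1 mul1r.
suff -> : \sum_j (Q *m diagm A) x j * Jmx R N j x = \sum_z Q x z * (N%:R^-1 * A z z).
  by ring.
apply: eq_bigr => z _; rewrite !mxE.
rewrite (bigD1 z) //= big1 => [|t tz]; last by rewrite !mxE (negbTE tz) mul0r mulr0.
by rewrite !mxE eqxx mul1r addr0 mulrCA mulrC.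
Qed.

Hypothesis N_gt0 : (0 < N)%N.

Lemma mnorm_centered_diagm A :
  mnorm (N%:R^-1 *: diagm A - (\tr A / N%:R ^+ 2) *: 1%:M) =
  (\sum_x `|N%:R * A x x - \tr A|) / N%:R ^+ 2.
Proof.
have N_neq0 : N%:R != 0 :> R by rewrite pnatr_eq0 -lt0n.
rewrite mnorm_scaled_diagm_sub [RHS]mulr_suml; apply: eq_bigr => x _.
have -> : N%:R^-1 * A x x - \tr A / N%:R ^+ 2 = (N%:R * A x x - \tr A) / N%:R ^+ 2.
  by field.
by rewrite normrM [`|_^-1|]ger0_norm // invr_ge0 exprn_ge0 ?ler0n.
Qed.

Lemma mnorm_centered_diagm_cluster_le A gamma : 0 <= gamma -> (forall x, 0 <= A x x <= 1) ->
  mnorm (N%:R^-1 *: diagm A - (\tr A / N%:R ^+ 2) *: 1%:M) <=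
  4 * (\big[minn/N]_x (N - #|[set y | (`|A x x - A y y| <= gamma)%R]|)%N)%:R / N%:R + gamma.
Proof.
move=> g_ge0 A01; have N_pos : 0 < N%:R :> R by rewrite ltr0n.
have N_neq0 : N%:R != 0 :> R by rewrite gt_eqF.
rewrite mnorm_centered_diagm ler_pdivrMr ?exprn_gt0 //.
pose a x := A x x.
pose B m := \sum_x `|N%:R * a x - \tr A| <= (4 * m%:R / N%:R + gamma) * N%:R ^+ 2.
have cluster_bound (C : {set 'I_N}) l :
    (forall y, y \in C -> l <= a y <= l + 2 * gamma) -> B (N - #|C|)%N.
  move=> aC; have := sum_dev_le_sum_dist a; rewrite card_ord => /le_trans; apply.
  have w_ge0 : 0 <= 2 * gamma by rewrite mulr_ge0.
  have := sum_dist_cluster A01 w_ge0 aC; rewrite card_ord => /le_trans; apply.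
  have : 0 <= (N - #|C|)%:R :> R by [].
  have -> : (4 * (N - #|C|)%:R / N%:R + gamma) * N%:R ^+ 2 =
            4 * N%:R * (N - #|C|)%:R + N%:R ^+ 2 * gamma by field.
  by nra.
apply: (big_ind B).
- by rewrite -[N in B N]subn0 -(cards0 'I_N); apply: (cluster_bound _ 0) => y; rewrite inE.
- by move=> m1 m2 ? ?; rewrite /minn; case: ifP.
move=> x _; apply: (cluster_bound _ (a x - gamma)) => y; rewrite inE => axy.
by move: axy; rewrite /a ler_norml => /andP[? ?]; apply/andP; split; lra.
Qed.

Lemma mnorm_centered_diagm_spectral_le Q s : Q^T = Q -> stochastic Q -> irreducible_mx Q ->
  mnorm (N%:R^-1 *: diagm (Q ^+ s) - (\tr (Q ^+ s) / N%:R ^+ 2) *: 1%:M) <=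
  2 * spec_tr Q (fun q => `|q| ^+ s) (fun q => q < 1) / N%:R.
Proof.
move=> Q_sym Q_st Q_irr; have N_neq0 : N%:R != 0 :> R by rewrite pnatr_eq0 -lt0n.
have [r [W [W_distr QkE r_le1 W_unif charQ]]] :=
  stochastic_spectral_decomposition Q_sym Q_st Q_irr.
rewrite mnorm_centered_diagm (spec_trE _ _ charQ) ler_pdivrMr ?exprn_gt0 ?ltr0n //.
have := sum_dev_spectral_le W_distr (QkE s) r_le1; rewrite card_ord => /(_ W_unif).
move=> /le_trans; apply; set S := \sum_(i | r i < 1) _.
by rewrite (_ : 2 * S / N%:R * N%:R ^+ 2 = 2 * N%:R * S) //; field.
Qed.

End DiagonalDeviation.

Theorem lemma4p8 (R : rcfType) (N : nat) (HN : (8 < N)%N) (Q : 'M[R]_N)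
  (Hsym : Q^T = Q) (Hsto : stochastic Q) (Hirr : irreducible_mx Q)
  (Htr : \tr Q = 0) (s : nat) (gamma : R) (Hg0 : 0 <= gamma) (Hg1 : gamma <= 1) :
  let Qs := Q ^+ s in
  let c := \tr Qs / (N%:R ^+ 2) in
  mnorm (diagm (Q *m diagm Qs *m Jmx R N) - c *: 1%:M)
    <= mnorm (N%:R^-1 *: diagm Qs - c *: 1%:M)
  /\
  mnorm (N%:R^-1 *: diagm Qs - c *: 1%:M)
    <= Num.min
         (4 * (\big[minn/N]_(x : 'I_N) (N - #|Rset Q gamma x s|)%N)%:R / N%:R + gamma)
         (2 * spec_tr Q (fun q => `|q| ^+ s) (fun q => q < 1) / N%:R).
Proof.
have N_gt0 : (0 < N)%N by apply: leq_ltn_trans HN.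
move=> Qs c; split; first exact: mnorm_diagm_smooth_le.
rewrite le_min mnorm_centered_diagm_spectral_le // andbT.
apply: mnorm_centered_diagm_cluster_le => // x.
exact: stochastic_entry_bounds (stochastic_exp s Hsto).
Qed.
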